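(* For real $c>4$, \[ Z(s,x+x^{-1}+y+y^{-1}+c) = c^s \sum_{j=0}^\infty \binom{s}{2j} \frac{1}{c^{2j}} \binom{2j}{j}^2 = c^s\, {}_3F_2\left(\left.\begin{array}{c} -\frac{s}{2}, \frac{1-s}{2}, \frac12 \\ 1,1 \end{array}\right| \frac{16}{c^2}\right). \]
   Context: For a nonzero Laurent polynomial $P\in\mathbb{C}[x_1^{\pm1},\dots,x_n^{\pm1}]$, the zeta Mahler measure is $Z(s,P)=\int_0^1\cdots\int_0^1 \left|P(\mathrm{e}^{2\pi i\theta_1},\dots,\mathrm{e}^{2\pi i\theta_n})\right|^s \,\mathrm{d}\theta_1\cdots\mathrm{d}\theta_n$. The generalized hypergeometric series is ${}_3F_2\left(\left.\begin{array}{c} a_1,a_2,a_3 \\ b_1,b_2 \end{array}\right| z\right)=\sum_{j=0}^\infty \frac{(a_1)_j(a_2)_j(a_3)_j}{(b_1)_j(b_2)_j\, j!}z^j$, with Pochhammer symbol $(a)_j=a(a+1)\cdots(a+j-1)$. *)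

From Stdlib Require Import Reals Factorial.
From Coquelicot Require Import Coquelicot.
Open Scope R_scope.

Definition cexp (z : C) : C :=
  (exp (Re z) * cos (Im z), exp (Re z) * sin (Im z))%R.

Definition e2pi (t : R) : C := cexp (0%R, (2 * PI * t)%R).

(* a^s for real a >= 0 and complex s, principal branch: exp(s ln a); 0^s := 0 *)
Definition rpowC (a : R) (s : C) : C :=
  if Rlt_dec 0 a then cexp (Cmult s (RtoC (ln a))) else RtoC 0.

(* Zeta Mahler measure of a two-variable Laurent polynomial (given as a function on
   (C minus 0)^2), with the integral over [0,1]^2 written as an iterated Riemann integral *)
Definition zeta_mahler2 (P : C -> C -> C) (s : C) : C :=
  RInt (V := C_R_CompleteNormedModule)
    (fun t1 => RInt (V := C_R_CompleteNormedModule)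
       (fun t2 => rpowC (Cmod (P (e2pi t1) (e2pi t2))) s) 0 1) 0 1.

Definition Pc (c : R) (x y : C) : C :=
  Cplus (Cplus (Cplus (Cplus x (Cinv x)) y) (Cinv y)) (RtoC c).

Fixpoint poch (a : C) (j : nat) : C :=
  match j with
  | O => RtoC 1
  | S k => Cmult (poch a k) (Cplus a (RtoC (INR k)))
  end.

Fixpoint cbinom_num (s : C) (n : nat) : C :=
  match n with
  | O => RtoC 1
  | S k => Cmult (cbinom_num s k) (Cminus s (RtoC (INR k)))
  end.
Definition cbinom (s : C) (n : nat) : C := Cdiv (cbinom_num s n) (RtoC (INR (fact n))).

Definition F32_term (a1 a2 a3 b1 b2 z : C) (j : nat) : C :=
  Cmult (Cdiv (Cmult (Cmult (poch a1 j) (poch a2 j)) (poch a3 j))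
              (Cmult (Cmult (poch b1 j) (poch b2 j)) (RtoC (INR (fact j)))))
        (Cpow z j).

(* On the torus x = e^(2 pi i t1), y = e^(2 pi i t2) the polynomial is the positive real number
   c + 2 cos(2 pi t1) + 2 cos(2 pi t2) = c (1 + X) with |X| <= 4/c < 1, so
   |P|^s = c^s sum_n binom(s, n) X^n uniformly on the torus; the binomial series for a complex
   exponent follows from the differential equation (1 + x) g' = s g.  Integrating term by term,
   the odd moments of X vanish, and the (2j)-th moment of 2 cos(2 pi t1) + 2 cos(2 pi t2) is
   sum_a C(2j, 2a) C(2a, a) C(2j-2a, j-a) = C(2j, j)^2 by Vandermonde's identity.  The 3F2 form
   is the same series, by (-s/2)_j ((1-s)/2)_j = s (s-1) ... (s-2j+1) / 4^j and
   (1/2)_j = (2j)! / (4^j j!). *)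

From Stdlib Require Import Reals Lra Lia Psatz Factorial.
From Coquelicot Require Import Coquelicot.
From mathcomp Require ssreflect ssrfun ssrbool eqtype ssrnat seq fintype bigop binomial.
Open Scope R_scope.

(* Vandermonde's identity is taken from mathcomp, whose binomials vanish beyond the range,
   unlike [Binomial.C n m] for [m > n]. *)
Module BinomialSquares.
Import ssreflect ssrfun ssrbool eqtype ssrnat seq fintype bigop binomial.

Lemma C_binomial n m : (m <= n)%N -> Binomial.C n m = INR 'C(n, m).
Proof.
  move=> le_mn; have fact_eq k : k`! = fact k by elim: k => [|k IHk] //; rewrite factS IHk.
  rewrite /Binomial.C -[(n - m)%coq_nat]/(n - m)%N -!fact_eq -(bin_fact le_mn) !mult_INR.
  by field; split; rewrite fact_eq; exact: INR_fact_neq_0.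
Qed.

Lemma sum_f_R0_INR (f : nat -> nat) n :
  sum_f_R0 (fun i => INR (f i)) n = INR (\sum_(i < n.+1) f i).
Proof.
  elim: n => [|n IHn] /=; first by rewrite big_ord_recr big_ord0.
  by rewrite IHn [in RHS]big_ord_recr plus_INR.
Qed.

Lemma sum_C_sqr j : sum_f_R0 (fun i => Binomial.C j i ^ 2) j = Binomial.C (Nat.mul 2 j) j.
Proof.
  rewrite (@C_binomial _ _ (leq_pmull j (isT : 0 < 2)%N)) mul2n -addnn -Vandermonde
    -(sum_f_R0_INR (fun i => 'C(j, i) * 'C(j, j - i))%N).
  apply: PartSum.sum_eq => i /leP le_ij; rewrite C_binomial //.
  by rewrite bin_sub // mult_INR /=; ring.
Qed.

End BinomialSquares.

(** * Moments of 2 cos(2 pi t) *)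

Lemma is_RInt_mult_l (k : R) (f : R -> R) a b l :
  is_RInt f a b l -> is_RInt (fun t => k * f t) a b (k * l).
Proof. exact (is_RInt_scal (V := R_NormedModule) f a b k l). Qed.

Definition cos2pi (t : R) : R := cos (2 * PI * t).

Lemma is_RInt_cos2pi_pow_SS k J :
  is_RInt (fun t => cos2pi t ^ k) 0 1 J ->
  is_RInt (fun t => cos2pi t ^ S (S k)) 0 1 (INR (S k) / INR (S (S k)) * J).
Proof.
  intros HJ.
  (* integration by parts, in the form of the derivative of sin(2 pi t) cos(2 pi t)^(k+1) *)
  set (f := fun t => sin (2 * PI * t) * cos2pi t ^ S k).
  set (df := fun t => 2 * PI * (INR (S (S k)) * cos2pi t ^ S (S k) - INR (S k) * cos2pi t ^ k)).
  assert (Hdf : is_RInt df 0 1 (minus (f 1) (f 0))).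
  { apply (is_RInt_derive (V := R_CompleteNormedModule)).
    - intros x _. unfold f, df, cos2pi. auto_derive; [easy|].
      change (match k with 0%nat => 1 | S _ => INR k + 1 end) with (INR (S k)).
      assert (Hsc := sin2 (2 * PI * x)). unfold Rsqr in Hsc.
      set (co := cos (2 * PI * x)) in *. set (si := sin (2 * PI * x)) in *.
      replace (co ^ S (S k)) with (co * (co * co ^ k)) by (simpl; ring).
      replace (si * (2 * PI * 1 * - si * (INR (S k) * co ^ k)))
        with (- (2 * PI * INR (S k) * co ^ k) * (si * si)) by ring.
      rewrite Hsc, !S_INR. ring.
    - intros x _. apply (ex_derive_continuous (K := R_AbsRing) (V := R_NormedModule)).
      unfold df, cos2pi. auto_derive. easy. }
  assert (Hf : minus (f 1) (f 0) = 0).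
  { unfold f, minus, plus, opp; simpl. rewrite Rmult_0_r, Rmult_1_r, sin_0, sin_2PI. ring. }
  rewrite Hf in Hdf.
  assert (H := is_RInt_scal _ _ _ (/ (2 * PI * INR (S (S k))))
                 _ (is_RInt_plus _ _ _ _ _ _ Hdf (is_RInt_scal _ _ _ (2 * PI * INR (S k)) _ HJ))).
  assert (PI0 := PI_RGT_0).
  assert (Hk : INR (S (S k)) <> 0) by (apply not_0_INR; lia).
  replace (INR (S k) / INR (S (S k)) * J)
    with (scal (/ (2 * PI * INR (S (S k)))) (plus 0 (scal (2 * PI * INR (S k)) J))).
  - eapply is_RInt_ext; [|exact H]. intros x _.
    unfold df, plus, scal; simpl; unfold mult; simpl. field. split; [exact Hk | lra].
  - unfold plus, scal; simpl; unfold mult; simpl. field. split; [exact Hk | lra].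
Qed.

Lemma C_central_S j :
  Binomial.C (2 * S j) (S j) = Binomial.C (2 * j) j * (2 * (2 * INR j + 1) / (INR j + 1)).
Proof.
  unfold Binomial.C. replace (2 * S j - S j)%nat with (S j) by lia.
  replace (2 * j - j)%nat with j by lia. replace (2 * S j)%nat with (S (S (2 * j))) by lia.
  rewrite !fact_simpl, !mult_INR, !S_INR, mult_INR. simpl (INR 2).
  assert (H1 := INR_fact_neq_0 (2 * j)). assert (H2 := INR_fact_neq_0 j).
  assert (H3 := pos_INR j).
  field. repeat split; auto; lra.
Qed.

Lemma is_RInt_cos2pi_pow j :
  is_RInt (fun t => cos2pi t ^ (2 * j)) 0 1 (Binomial.C (2 * j) j / 4 ^ j)
  /\ is_RInt (fun t => cos2pi t ^ S (2 * j)) 0 1 0.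
Proof.
  induction j as [|j [IHeven IHodd]].
  - split.
    + replace (Binomial.C (2 * 0) 0 / 4 ^ 0) with (scal (1 - 0) 1)
        by (unfold Binomial.C, scal; simpl; unfold mult; simpl; field).
      apply (is_RInt_ext (fun _ => 1)); [easy|]. apply (is_RInt_const (V := R_NormedModule)).
    + change (S (2 * 0)) with 1%nat. assert (PI0 := PI_RGT_0).
      set (f := fun t => sin (2 * PI * t) / (2 * PI)).
      assert (Hf : minus (f 1) (f 0) = 0).
      { unfold f, minus, plus, opp; simpl.
        rewrite Rmult_0_r, Rmult_1_r, sin_0, sin_2PI. field. lra. }
      rewrite <- Hf at 2. apply (is_RInt_derive (V := R_CompleteNormedModule)).
      * intros x _. unfold f, cos2pi. auto_derive; [easy|]. field. lra.
      * intros x _. apply (ex_derive_continuous (K := R_AbsRing) (V := R_NormedModule)).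
        unfold cos2pi. auto_derive. easy.
  - replace (2 * S j)%nat with (S (S (2 * j))) by lia. split.
    + replace (Binomial.C (S (S (2 * j))) (S j) / 4 ^ S j)
        with (INR (S (2 * j)) / INR (S (S (2 * j))) * (Binomial.C (2 * j) j / 4 ^ j)).
      * now apply is_RInt_cos2pi_pow_SS.
      * replace (S (S (2 * j))) with (2 * S j)%nat at 2 by lia. rewrite C_central_S.
        rewrite !S_INR, mult_INR. simpl (INR 2). assert (H := pos_INR j).
        assert (H4 : 4 ^ j <> 0) by (apply pow_nonzero; lra).
        simpl pow. field. repeat split; lra.
    + apply is_RInt_cos2pi_pow_SS in IHodd. now rewrite Rmult_0_r in IHodd.
Qed.

Definition cos_moment (k : nat) : R :=
  if Nat.even k then Binomial.C k (Nat.div2 k) else 0.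

Lemma cos_moment_even j : cos_moment (2 * j) = Binomial.C (2 * j) j.
Proof. unfold cos_moment. now rewrite Nat.even_mul, Nat.div2_double. Qed.

Lemma cos_moment_odd j : cos_moment (S (2 * j)) = 0.
Proof. unfold cos_moment. now rewrite Nat.even_succ, Nat.odd_mul. Qed.

Lemma is_RInt_2cos2pi_pow k : is_RInt (fun t => (2 * cos2pi t) ^ k) 0 1 (cos_moment k).
Proof.
  apply (is_RInt_ext (fun t => 2 ^ k * cos2pi t ^ k)); [intros; now rewrite Rpow_mult_distr|].
  destruct (Nat.Even_or_Odd k) as [[j ->]|[j ->]].
  - rewrite cos_moment_even.
    replace (Binomial.C (2 * j) j) with (2 ^ (2 * j) * (Binomial.C (2 * j) j / 4 ^ j)).
    + apply is_RInt_mult_l, (proj1 (is_RInt_cos2pi_pow j)).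
    + rewrite pow_mult. replace (2 ^ 2) with 4 by ring. field. apply pow_nonzero; lra.
  - replace (2 * j + 1)%nat with (S (2 * j)) by lia. rewrite cos_moment_odd.
    rewrite <- (Rmult_0_r (2 ^ S (2 * j))) at 2.
    apply is_RInt_mult_l, (proj2 (is_RInt_cos2pi_pow j)).
Qed.

Lemma is_RInt_sum_f_R0 (g : nat -> R -> R) (I : nat -> R) a b n :
  (forall i, (i <= n)%nat -> is_RInt (g i) a b (I i)) ->
  is_RInt (fun t => sum_f_R0 (fun i => g i t) n) a b (sum_f_R0 I n).
Proof.
  induction n as [|n IHn]; intros H; simpl.
  - apply H; lia.
  - apply (is_RInt_plus (V := R_NormedModule)); [apply IHn; intros|]; apply H; lia.
Qed.

Lemma is_RInt_shifted_2cos2pi_pow n y :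
  is_RInt (fun t => (y + 2 * cos2pi t) ^ n) 0 1
    (sum_f_R0 (fun i => Binomial.C n i * cos_moment i * y ^ (n - i)) n).
Proof.
  apply (is_RInt_ext
           (fun t => sum_f_R0 (fun i => Binomial.C n i * (2 * cos2pi t) ^ i * y ^ (n - i)) n)).
  { intros x _. now rewrite Rplus_comm, binomial. }
  apply is_RInt_sum_f_R0. intros i _.
  apply (is_RInt_ext (fun t => Binomial.C n i * y ^ (n - i) * (2 * cos2pi t) ^ i));
    [intros; simpl; ring|].
  replace (Binomial.C n i * cos_moment i * y ^ (n - i))
    with (Binomial.C n i * y ^ (n - i) * cos_moment i) by ring.
  apply is_RInt_mult_l, is_RInt_2cos2pi_pow.
Qed.

Definition double_moment (n : nat) : R :=
  sum_f_R0 (fun i => Binomial.C n i * cos_moment i * cos_moment (n - i)) n.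

Lemma is_RInt_double_moment n :
  is_RInt (fun t => sum_f_R0 (fun i => Binomial.C n i * cos_moment i * (2 * cos2pi t) ^ (n - i)) n)
    0 1 (double_moment n).
Proof.
  apply is_RInt_sum_f_R0. intros i _.
  apply is_RInt_mult_l, is_RInt_2cos2pi_pow.
Qed.

Lemma double_moment_odd j : double_moment (S (2 * j)) = 0.
Proof.
  apply sum_eq_R0. intros i Hi.
  destruct (Nat.Even_or_Odd i) as [[a ->]|[a ->]].
  - replace (S (2 * j) - 2 * a)%nat with (S (2 * (j - a))) by lia.
    rewrite cos_moment_odd. ring.
  - replace (2 * a + 1)%nat with (S (2 * a)) by lia.
    rewrite cos_moment_odd. ring.
Qed.

Lemma sum_f_R0_even (f : nat -> R) j :
  (forall a, f (S (2 * a)) = 0) -> sum_f_R0 f (2 * j) = sum_f_R0 (fun a => f (2 * a)%nat) j.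
Proof.
  intros Hodd. induction j as [|j IHj]; [reflexivity|].
  replace (2 * S j)%nat with (S (S (2 * j))) by lia.
  rewrite (tech5 f (S (2 * j))), (tech5 f (2 * j)), IHj, Hodd, (tech5 _ j).
  replace (S (S (2 * j))) with (2 * S j)%nat by lia. ring.
Qed.

(* C(2j,2a) C(2a,a) C(2j-2a,j-a) = C(2j,j) C(j,a)^2: both sides are (2j)! / (a! (j-a)!)^2 *)
Lemma double_moment_even j : double_moment (2 * j) = Binomial.C (2 * j) j ^ 2.
Proof.
  unfold double_moment. rewrite sum_f_R0_even by (intros a; rewrite cos_moment_odd; ring).
  replace (Binomial.C (2 * j) j ^ 2)
    with (Binomial.C (2 * j) j * sum_f_R0 (fun a => Binomial.C j a ^ 2) j)
    by (rewrite BinomialSquares.sum_C_sqr; ring).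
  rewrite scal_sum.
  apply sum_eq. intros a Ha.
  replace (2 * j - 2 * a)%nat with (2 * (j - a))%nat by lia.
  rewrite !cos_moment_even. unfold Binomial.C.
  replace (2 * j - 2 * a)%nat with (2 * (j - a))%nat by lia.
  replace (2 * j - j)%nat with j by lia. replace (2 * a - a)%nat with a by lia.
  replace (2 * (j - a) - (j - a))%nat with (j - a)%nat by lia.
  assert (H1 := INR_fact_neq_0 (2 * j)). assert (H2 := INR_fact_neq_0 j).
  assert (H3 := INR_fact_neq_0 (2 * a)). assert (H4 := INR_fact_neq_0 a).
  assert (H5 := INR_fact_neq_0 (2 * (j - a))). assert (H6 := INR_fact_neq_0 (j - a)).
  field. repeat split; auto.
Qed.

(** * The binomial series *)

Fixpoint rpoch (a : R) (j : nat) : R :=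
  match j with O => 1 | S k => rpoch a k * (a + INR k) end.

Lemma rpoch_pos a n : 0 < a -> 0 < rpoch a n.
Proof.
  intros Ha. induction n as [|n IHn]; simpl; [lra|].
  apply Rmult_lt_0_compat; [exact IHn|]. assert (H := pos_INR n). lra.
Qed.

Lemma RtoC_neq_0 x : x <> 0 -> RtoC x <> RtoC 0.
Proof. intros Hx E. apply Hx, RtoC_inj, E. Qed.

Lemma cbinom_S s n :
  Cmult (cbinom s (S n)) (RtoC (INR (S n))) = Cmult (cbinom s n) (Cminus s (RtoC (INR n))).
Proof.
  unfold cbinom. simpl cbinom_num. rewrite fact_simpl, mult_INR, RtoC_mult.
  assert (H1 := RtoC_neq_0 _ (INR_fact_neq_0 n)).
  assert (H2 : RtoC (INR (S n)) <> RtoC 0) by (apply RtoC_neq_0, not_0_INR; lia).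
  field. split; auto.
Qed.

Lemma Cmod_cbinom_num_le s n : Cmod (cbinom_num s n) <= rpoch (Cmod s + 1) n.
Proof.
  induction n as [|n IHn]; simpl.
  - rewrite Cmod_1. lra.
  - rewrite Cmod_mult. apply Rmult_le_compat; [apply Cmod_ge_0 | apply Cmod_ge_0 | exact IHn |].
    unfold Cminus. eapply Rle_trans; [apply Cmod_triangle|].
    rewrite Cmod_opp, Cmod_R, Rabs_pos_eq by apply pos_INR. lra.
Qed.

Lemma Cmod_cbinom_le s n : Cmod (cbinom s n) <= rpoch (Cmod s + 1) n / INR (fact n).
Proof.
  assert (Hf := INR_fact_lt_0 n).
  unfold cbinom. rewrite Cmod_div, Cmod_R, Rabs_pos_eq by (lra || apply RtoC_neq_0; lra).
  apply Rmult_le_compat_r; [apply Rlt_le, Rinv_0_lt_compat, Hf | apply Cmod_cbinom_num_le].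
Qed.

Lemma ex_series_rpoch a r :
  0 < a -> 0 < r < 1 -> ex_series (fun n => rpoch a n / INR (fact n) * r ^ n).
Proof.
  intros Ha Hr.
  assert (Hpos : forall n, 0 < rpoch a n / INR (fact n) * r ^ n).
  { intros n. apply Rmult_lt_0_compat; [apply Rdiv_lt_0_compat|apply pow_lt; lra].
    - now apply rpoch_pos.
    - apply INR_fact_lt_0. }
  apply (ex_series_ext (fun n => Rabs (rpoch a n / INR (fact n) * r ^ n))).
  { intros n. apply Rabs_pos_eq, Rlt_le, Hpos. }
  apply (ex_series_DAlembert _ r); [lra | intros n; apply Rgt_not_eq, Hpos |].
  apply (is_lim_seq_ext (fun n => r * (1 + (a - 1) * / (INR n + 1)))).
  { intros n. rewrite Rabs_pos_eq by (apply Rlt_le, Rdiv_lt_0_compat; apply Hpos).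
    cbn [rpoch pow]. rewrite fact_simpl, mult_INR, S_INR.
    assert (P := pos_INR n). assert (Hf := INR_fact_lt_0 n).
    assert (Hp := rpoch_pos a n Ha). assert (Hrn := pow_lt r n (proj1 Hr)).
    field. repeat split; lra. }
  replace (Finite r) with (Rbar_mult r (Rbar_plus 1 (Rbar_mult (a - 1) 0)))
    by (simpl; f_equal; ring).
  apply is_lim_seq_mult'; [apply is_lim_seq_const|].
  apply is_lim_seq_plus'; [apply is_lim_seq_const|].
  apply is_lim_seq_mult'; [apply is_lim_seq_const|].
  replace (Finite 0) with (Rbar_inv p_infty) by reflexivity.
  apply is_lim_seq_inv; [|discriminate].
  apply (is_lim_seq_ext (fun n => INR (S n))); [intros; apply S_INR|].
  apply (is_lim_seq_incr_1 INR p_infty), is_lim_seq_INR.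
Qed.

Lemma ex_series_Cmod_cbinom s r : 0 < r < 1 -> ex_series (fun n => Cmod (cbinom s n) * r ^ n).
Proof.
  intros Hr.
  apply (ex_series_le (V := R_CompleteNormedModule) _
           (fun n => rpoch (Cmod s + 1) n / INR (fact n) * r ^ n)).
  - intros n. assert (Hrn := pow_le r n (Rlt_le _ _ (proj1 Hr))).
    unfold norm; simpl. rewrite Rabs_pos_eq by (apply Rmult_le_pos; [apply Cmod_ge_0|exact Hrn]).
    apply Rmult_le_compat_r; [exact Hrn | apply Cmod_cbinom_le].
  - apply ex_series_rpoch; [assert (H := Cmod_ge_0 s); lra | exact Hr].
Qed.

Lemma is_derive_0_const (h : R -> R) x :
  (forall t, Rabs t < 1 -> is_derive h t 0) -> Rabs x < 1 -> h x = h 0.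
Proof.
  intros Hd Hx. apply Rabs_def2 in Hx.
  destruct (Rtotal_order x 0) as [Hneg|[->|Hpos]]; [| reflexivity |].
  - apply (eq_is_derive (V := R_NormedModule)); [|lra].
    intros t Ht. apply Hd, Rabs_def1; lra.
  - symmetry. apply (eq_is_derive (V := R_NormedModule)); [|lra].
    intros t Ht. apply Hd, Rabs_def1; lra.
Qed.

Section RotationODE.

Variables (a b : R) (f g : R -> R).
Hypothesis f_derivable : forall t, Rabs t < 1 -> ex_derive f t.
Hypothesis g_derivable : forall t, Rabs t < 1 -> ex_derive g t.
Hypothesis f_ode : forall t, Rabs t < 1 -> (1 + t) * Derive f t = a * f t - b * g t.
Hypothesis g_ode : forall t, Rabs t < 1 -> (1 + t) * Derive g t = b * f t + a * g t.

(* real and imaginary parts of (1 + t)^-(a + i b) (f t + i g t) *)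
Let inv_re t := exp (- a * ln (1 + t)) * (cos (b * ln (1 + t)) * f t + sin (b * ln (1 + t)) * g t).
Let inv_im t := exp (- a * ln (1 + t)) * (cos (b * ln (1 + t)) * g t - sin (b * ln (1 + t)) * f t).

Lemma is_derive_rotation_invariants t :
  Rabs t < 1 -> is_derive inv_re t 0 /\ is_derive inv_im t 0.
Proof.
  intros Ht. assert (H1 : 0 < 1 + t) by (apply Rabs_def2 in Ht; lra).
  assert (Ef : Derive f t = (a * f t - b * g t) / (1 + t))
    by (rewrite <- f_ode by exact Ht; field; lra).
  assert (Eg : Derive g t = (b * f t + a * g t) / (1 + t))
    by (rewrite <- g_ode by exact Ht; field; lra).
  unfold inv_re, inv_im. split; auto_derive;
    try (repeat split; auto); change (fun x => f x) with f; change (fun x => g x) with g;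
    rewrite Ef, Eg; field; lra.
Qed.

Lemma rotation_ode_solution x :
  f 0 = 1 -> g 0 = 0 -> Rabs x < 1 ->
  f x = exp (a * ln (1 + x)) * cos (b * ln (1 + x))
  /\ g x = exp (a * ln (1 + x)) * sin (b * ln (1 + x)).
Proof.
  intros f0 g0 Hx.
  assert (Hre := is_derive_0_const inv_re x
                   (fun t Ht => proj1 (is_derive_rotation_invariants t Ht)) Hx).
  assert (Him := is_derive_0_const inv_im x
                   (fun t Ht => proj2 (is_derive_rotation_invariants t Ht)) Hx).
  unfold inv_re, inv_im in Hre, Him.
  rewrite Rplus_0_r, ln_1, !Rmult_0_r, exp_0, cos_0, sin_0, f0, g0 in Hre, Him.
  set (L := ln (1 + x)) in *.
  assert (HE : exp (- a * L) * exp (a * L) = 1)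
    by (rewrite <- exp_plus; replace (- a * L + a * L) with 0 by ring; apply exp_0).
  assert (HE0 : exp (- a * L) <> 0) by apply Rgt_not_eq, exp_pos.
  assert (Hsc := sin2_cos2 (b * L)). unfold Rsqr in Hsc.
  set (co := cos (b * L)) in *. set (si := sin (b * L)) in *.
  assert (Hre' : co * f x + si * g x = exp (a * L)).
  { apply (Rmult_eq_reg_l (exp (- a * L))); [|exact HE0]. rewrite HE, Hre. ring. }
  assert (Him' : co * g x - si * f x = 0).
  { apply (Rmult_eq_reg_l (exp (- a * L))); [|exact HE0]. rewrite Him. ring. }
  split.
  - transitivity (co * (co * f x + si * g x) - si * (co * g x - si * f x));
      [rewrite <- (Rmult_1_r (f x)) at 1; rewrite <- Hsc; ring | rewrite Hre', Him'; ring].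
  - transitivity (si * (co * f x + si * g x) + co * (co * g x - si * f x));
      [rewrite <- (Rmult_1_r (g x)) at 1; rewrite <- Hsc; ring | rewrite Hre', Him'; ring].
Qed.

End RotationODE.

Lemma CV_radius_gt_dominated (u : nat -> R) (w : nat -> R) x :
  (forall n, Rabs (u n) <= w n) -> (forall r, 0 < r < 1 -> ex_series (fun n => w n * r ^ n)) ->
  Rabs x < 1 -> Rbar_lt (Rabs x) (CV_radius u).
Proof.
  intros Hu Hw Hx. set (r := (Rabs x + 1) / 2).
  assert (Hr : 0 < r < 1) by (assert (H := Rabs_pos x); unfold r; lra).
  assert (Hdisk : CV_disk u r).
  { apply (ex_series_le (V := R_CompleteNormedModule) _ (fun n => w n * r ^ n)); [|now apply Hw].
    intros n. unfold norm; simpl.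
    rewrite Rabs_Rabsolu, Rabs_mult, (Rabs_pos_eq (r ^ n)) by (apply pow_le; lra).
    apply Rmult_le_compat_r; [apply pow_le; lra | apply Hu]. }
  apply (Rbar_lt_le_trans _ (Finite r)); [simpl; unfold r; lra|].
  apply (proj1 (Lub_Rbar_correct (CV_disk u))), Hdisk.
Qed.

Lemma Derive_PSeries_rec (u v w : nat -> R) p q x :
  Rbar_lt (Rabs x) (CV_radius u) -> Rbar_lt (Rabs x) (CV_radius v) ->
  Rbar_lt (Rabs x) (CV_radius w) ->
  (forall n, u (S n) * INR (S n) = p * v n + q * w n - INR n * u n) ->
  (1 + x) * Derive (PSeries u) x = p * PSeries v x + q * PSeries w x.
Proof.
  intros Hu Hv Hw Hrec.
  rewrite (is_derive_unique _ _ _ (is_derive_PSeries u x Hu)).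
  assert (Hd := ex_pseries_derive u x Hu).
  rewrite Rmult_plus_distr_r, Rmult_1_l, <- PSeries_incr_1.
  rewrite <- PSeries_plus by (auto using ex_pseries_incr_1).
  rewrite <- (PSeries_scal p v), <- (PSeries_scal q w), <- PSeries_plus
    by (apply ex_pseries_scal; [apply Rmult_comm | now apply CV_radius_inside]).
  apply PSeries_ext. intros n.
  unfold PS_plus, PS_scal, PS_incr_1, PS_derive, plus, scal, zero; simpl; unfold mult; simpl.
  destruct n as [|n].
  - rewrite (Rmult_comm (INR 1)), Hrec. simpl. ring.
  - change (match n with 0%nat => 1 | S _ => INR n + 1 end) with (INR (S n)).
    rewrite <- S_INR, (Rmult_comm (INR (S (S n)))), Hrec. ring.
Qed.

Lemma Rabs_Im_le_Cmod z : Rabs (Im z) <= Cmod z.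
Proof.
  destruct z as [p q]. unfold Cmod; simpl.
  rewrite <- sqrt_Rsqr_abs. apply sqrt_le_1_alt. unfold Rsqr. nra.
Qed.

Section BinomialSeries.

Variable s : C.

Let cbinom_re n := Re (cbinom s n).
Let cbinom_im n := Im (cbinom s n).

Lemma CV_radius_cbinom_re x : Rabs x < 1 -> Rbar_lt (Rabs x) (CV_radius cbinom_re).
Proof.
  apply (CV_radius_gt_dominated _ (fun n => Cmod (cbinom s n)));
    [intros; apply re_le_Cmod | apply ex_series_Cmod_cbinom].
Qed.

Lemma CV_radius_cbinom_im x : Rabs x < 1 -> Rbar_lt (Rabs x) (CV_radius cbinom_im).
Proof.
  apply (CV_radius_gt_dominated _ (fun n => Cmod (cbinom s n)));
    [intros; apply Rabs_Im_le_Cmod | apply ex_series_Cmod_cbinom].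
Qed.

Lemma binom_series_components x :
  Rabs x < 1 ->
  PSeries cbinom_re x = exp (Re s * ln (1 + x)) * cos (Im s * ln (1 + x))
  /\ PSeries cbinom_im x = exp (Re s * ln (1 + x)) * sin (Im s * ln (1 + x)).
Proof.
  assert (Hrec := fun n => cbinom_S s n).
  assert (Hre : forall n, cbinom_re (S n) * INR (S n)
                         = Re s * cbinom_re n + (- Im s) * cbinom_im n - INR n * cbinom_re n).
  { intros n. assert (E := f_equal Re (Hrec n)). unfold cbinom_re, cbinom_im.
    destruct (cbinom s (S n)), (cbinom s n), s. simpl in *. lra. }
  assert (Him : forall n, cbinom_im (S n) * INR (S n)
                         = Im s * cbinom_re n + Re s * cbinom_im n - INR n * cbinom_im n).
  { intros n. assert (E := f_equal Im (Hrec n)). unfold cbinom_re, cbinom_im.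
    destruct (cbinom s (S n)), (cbinom s n), s. simpl in *. lra. }
  apply rotation_ode_solution.
  - intros t Ht. eexists. now apply is_derive_PSeries, CV_radius_cbinom_re.
  - intros t Ht. eexists. now apply is_derive_PSeries, CV_radius_cbinom_im.
  - intros t Ht.
    rewrite Derive_PSeries_rec with (p := Re s) (q := - Im s) (v := cbinom_re) (w := cbinom_im);
      auto using CV_radius_cbinom_re, CV_radius_cbinom_im. ring.
  - intros t Ht. apply Derive_PSeries_rec; auto using CV_radius_cbinom_re, CV_radius_cbinom_im.
  - rewrite PSeries_0. unfold cbinom_re, cbinom, Cdiv; simpl. field.
  - rewrite PSeries_0. unfold cbinom_im, cbinom, Cdiv; simpl. field.
Qed.

End BinomialSeries.

Lemma is_series_C_components (u : nat -> C) l1 l2 :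
  is_series (fun n => Re (u n)) l1 -> is_series (fun n => Im (u n)) l2 ->
  is_series (V := C_NormedModule) u (l1, l2).
Proof.
  intros H1 H2. unfold is_series in *. apply filterlim_locally. intros eps.
  assert (B1 := proj1 (filterlim_locally _ _) H1 eps).
  assert (B2 := proj1 (filterlim_locally _ _) H2 eps).
  assert (Hre : forall N, Re (sum_n u N) = sum_n (fun n => Re (u n)) N).
  { induction N as [|N IHN]; [now rewrite !sum_O|]. rewrite !sum_Sn. simpl. now rewrite <- IHN. }
  assert (Him : forall N, Im (sum_n u N) = sum_n (fun n => Im (u n)) N).
  { induction N as [|N IHN]; [now rewrite !sum_O|]. rewrite !sum_Sn. simpl. now rewrite <- IHN. }
  generalize (filter_and _ _ B1 B2). apply filter_imp. intros N [C1 C2]. split.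
  - change (ball l1 eps (Re (sum_n u N))). now rewrite Hre.
  - change (ball l2 eps (Im (sum_n u N))). now rewrite Him.
Qed.

Lemma is_series_cbinom s x :
  Rabs x < 1 ->
  is_series (V := C_NormedModule) (fun n => Cmult (cbinom s n) (RtoC (x ^ n)))
    (cexp (Cmult s (RtoC (ln (1 + x))))).
Proof.
  intros Hx. destruct (binom_series_components s x Hx) as [Ere Eim].
  replace (cexp (Cmult s (RtoC (ln (1 + x)))))
    with (PSeries (fun n => Re (cbinom s n)) x, PSeries (fun n => Im (cbinom s n)) x).
  2:{ rewrite Ere, Eim. unfold cexp. destruct s. simpl. f_equal; f_equal; f_equal; ring. }
  apply is_series_C_components.
  - apply (is_series_ext (fun n => Re (cbinom s n) * x ^ n)).
    { intros n. destruct (cbinom s n). simpl. ring. }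
    apply is_pseries_R, PSeries_correct, CV_radius_inside, CV_radius_cbinom_re, Hx.
  - apply (is_series_ext (fun n => Im (cbinom s n) * x ^ n)).
    { intros n. destruct (cbinom s n). simpl. ring. }
    apply is_pseries_R, PSeries_correct, CV_radius_inside, CV_radius_cbinom_im, Hx.
Qed.

(** * Term-by-term integration *)

Lemma norm_C_R_Cmod (z : C) : norm (K := R_AbsRing) (V := C_R_NormedModule) z = Cmod z.
Proof.
  destruct z as [a b]. unfold norm; simpl. unfold prod_norm, Cmod; simpl.
  unfold norm; simpl; unfold abs; simpl.
  rewrite !Rmult_1_r, <- !Rabs_mult, !Rabs_pos_eq; auto; apply Rle_0_sqr.
Qed.

Lemma sum_n_le_series (v : nat -> R) L N :
  (forall n, 0 <= v n) -> is_series v L -> sum_n v N <= L.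
Proof.
  intros Hv HL.
  apply (is_lim_seq_le_loc (fun _ => sum_n v N) (sum_n v) (sum_n v N) L);
    [| apply is_lim_seq_const | exact HL].
  exists N. intros M HM. induction HM as [|M HM IHM]; [lra|].
  rewrite sum_Sn. unfold plus; simpl. specialize (Hv (S M)). lra.
Qed.

Lemma Cmod_series_tail_le (w : nat -> C) l (v : nat -> R) L N :
  is_series (V := C_NormedModule) w l -> (forall n, Cmod (w n) <= v n) -> is_series v L ->
  Cmod (Cminus l (sum_n w N)) <= L - sum_n v N.
Proof.
  intros Hw Hwv HL. apply Rle_plus_epsilon. intros eps Heps.
  assert (Hv : forall n, 0 <= v n) by (intros n; eapply Rle_trans; [apply Cmod_ge_0 | apply Hwv]).
  destruct (proj1 (filterlim_locally_ball_norm _ _) Hw (mkposreal eps Heps)) as [M0 HM0].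
  set (M := max M0 N). specialize (HM0 M (Nat.le_max_l _ _)). unfold ball_norm in HM0; simpl in HM0.
  assert (Hmid : Cmod (Cminus (sum_n w M) (sum_n w N)) <= sum_n v M - sum_n v N).
  { destruct (Nat.eq_dec M N) as [->|HMN].
    - unfold Cminus. rewrite Cplus_opp_r, Cmod_0. lra.
    - assert (HNM : (N <= M)%nat) by (unfold M; lia).
      change (Cminus (sum_n w M) (sum_n w N)) with (minus (sum_n w M) (sum_n w N)).
      change (sum_n v M - sum_n v N) with (minus (sum_n v M) (sum_n v N)).
      rewrite <- (sum_n_m_sum_n w), <- (sum_n_m_sum_n v) by exact HNM.
      eapply Rle_trans; [apply (norm_sum_n_m (K := C_AbsRing) (V := C_NormedModule))|].
      apply sum_n_m_le. intros k. apply Hwv. }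
  assert (Htail : Cmod (Cminus l (sum_n w M)) < eps).
  { replace (Cminus l (sum_n w M)) with (Copp (Cminus (sum_n w M) l)) by ring.
    rewrite Cmod_opp. exact HM0. }
  assert (HvM := sum_n_le_series v L M Hv HL).
  replace (Cminus l (sum_n w N))
    with (Cplus (Cminus l (sum_n w M)) (Cminus (sum_n w M) (sum_n w N))) by ring.
  eapply Rle_trans; [apply Cmod_triangle | lra].
Qed.

Lemma is_RInt_Cmult_RtoC (f : R -> R) (z : C) a b l :
  is_RInt f a b l ->
  is_RInt (V := C_R_CompleteNormedModule) (fun t => Cmult z (RtoC (f t))) a b (Cmult z (RtoC l)).
Proof.
  intros H. destruct z as [p q].
  replace (Cmult (p, q) (RtoC l)) with (scal p l, scal q l)
    by (unfold Cmult, RtoC, scal; simpl; unfold mult; simpl; f_equal; ring).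
  apply (is_RInt_fct_extend_pair (U := R_NormedModule) (V := R_NormedModule));
    (eapply is_RInt_ext; [|apply is_RInt_scal; exact H]);
    intros x _; unfold Cmult, RtoC, scal; simpl; unfold mult; simpl; ring.
Qed.

Lemma is_RInt_sum_n (g : nat -> R -> C) (I : nat -> C) a b N :
  (forall n, is_RInt (V := C_R_CompleteNormedModule) (g n) a b (I n)) ->
  is_RInt (V := C_R_CompleteNormedModule) (fun t => sum_n (fun n => g n t) N) a b (sum_n I N).
Proof.
  intros H. induction N as [|N IHN].
  - rewrite sum_O. apply (is_RInt_ext (g O)); [intros; now rewrite sum_O | apply H].
  - rewrite sum_Sn. apply (is_RInt_ext (fun t => plus (sum_n (fun n => g n t) N) (g (S N) t))).
    + intros x _. now rewrite sum_Sn.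
    + now apply (is_RInt_plus (V := C_R_CompleteNormedModule)).
Qed.

Lemma is_RInt_uniform_limit (fN : nat -> R -> C) (IN : nat -> C) (f : R -> C) (eps : nat -> R) :
  (forall N, is_RInt (V := C_R_CompleteNormedModule) (fN N) 0 1 (IN N)) ->
  (forall N t, Cmod (Cminus (f t) (fN N t)) <= eps N) -> is_lim_seq eps 0 ->
  is_RInt (V := C_R_CompleteNormedModule) f 0 1 (RInt (V := C_R_CompleteNormedModule) f 0 1)
  /\ filterlim IN eventually (locally (RInt (V := C_R_CompleteNormedModule) f 0 1)).
Proof.
  intros Hint Hbound Heps.
  destruct (filterlim_RInt (V := C_R_CompleteNormedModule) fN 0 1 eventually _ f IN Hint)
    as [If [HIf Hf]].
  - apply filterlim_locally. intros e.
    destruct (proj2 (is_lim_seq_spec eps 0) Heps e) as [M HM]. exists M. intros N HN t.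
    apply (norm_compat1 (K := R_AbsRing) (V := C_R_NormedModule)). rewrite norm_C_R_Cmod.
    change (Cmod (Cminus (fN N t) (f t)) < e).
    replace (Cminus (fN N t) (f t)) with (Copp (Cminus (f t) (fN N t))) by ring.
    rewrite Cmod_opp. specialize (HM N HN). apply Rabs_lt_between in HM.
    eapply Rle_lt_trans; [apply Hbound | lra].
  - rewrite (is_RInt_unique (V := C_R_CompleteNormedModule) _ _ _ _ Hf). now split.
Qed.

Lemma is_series_even (w : nat -> C) l :
  is_series (V := C_NormedModule) w l -> (forall j, w (S (2 * j)) = RtoC 0) ->
  is_series (V := C_NormedModule) (fun j => w (2 * j)%nat) l.
Proof.
  intros H Hodd.
  assert (E : forall N, sum_n (fun j => w (2 * j)%nat) N = sum_n w (2 * N)).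
  { induction N as [|N IHN]; [now rewrite !sum_O|].
    replace (2 * S N)%nat with (S (S (2 * N))) by lia.
    rewrite sum_Sn, IHN, !sum_Sn, Hodd. replace (S (S (2 * N))) with (2 * S N)%nat by lia.
    f_equal. symmetry. apply (plus_zero_r (G := C_AbelianGroup)). }
  unfold is_series in *. apply (filterlim_ext (fun N => sum_n w (2 * N))); [intros; now rewrite E|].
  apply (filterlim_comp _ _ _ (fun N => (2 * N)%nat) (sum_n w) eventually eventually); [|exact H].
  intros P [M HM]. exists M. intros n Hn. apply HM. lia.
Qed.

Lemma cexp_add z w : cexp (Cplus z w) = Cmult (cexp z) (cexp w).
Proof.
  destruct z as [a b], w as [a' b']. unfold cexp, Cplus, Cmult; simpl.
  rewrite exp_plus, cos_plus, sin_plus. f_equal; ring.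
Qed.

Lemma cexp_neq_0 z : cexp z <> RtoC 0.
Proof.
  unfold cexp, RtoC. intros E. injection E as E1 E2.
  assert (P := exp_pos (Re z)). assert (T := sin2_cos2 (Im z)). unfold Rsqr in T.
  apply Rmult_integral in E1, E2.
  destruct E1 as [E1|E1]; [lra|]. destruct E2 as [E2|E2]; [lra|].
  rewrite E1, E2 in T. lra.
Qed.

Lemma rpowC_pos a s : 0 < a -> rpowC a s = cexp (Cmult s (RtoC (ln a))).
Proof. intros Ha. unfold rpowC. destruct (Rlt_dec 0 a); [reflexivity | lra]. Qed.

Lemma Pc_e2pi c t1 t2 : Pc c (e2pi t1) (e2pi t2) = RtoC (c + 2 * cos2pi t1 + 2 * cos2pi t2).
Proof.
  unfold Pc, e2pi, cexp, cos2pi; simpl. rewrite exp_0, !Rmult_1_l.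
  assert (T1 := sin2_cos2 (2 * PI * t1)). assert (T2 := sin2_cos2 (2 * PI * t2)). unfold Rsqr in *.
  unfold Cplus, Cinv, RtoC; simpl.
  set (c1 := cos (2 * PI * t1)) in *. set (s1 := sin (2 * PI * t1)) in *.
  set (c2 := cos (2 * PI * t2)) in *. set (s2 := sin (2 * PI * t2)) in *.
  replace (c1 * (c1 * 1) + s1 * (s1 * 1)) with 1 by lra.
  replace (c2 * (c2 * 1) + s2 * (s2 * 1)) with 1 by lra.
  f_equal; field.
Qed.

Lemma Rabs_2cos2pi_le t : Rabs (2 * cos2pi t) <= 2.
Proof.
  unfold cos2pi. rewrite Rabs_mult, Rabs_pos_eq by lra.
  assert (H := COS_bound (2 * PI * t)).
  assert (Rabs (cos (2 * PI * t)) <= 1) by (apply Rabs_le; lra). lra.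
Qed.

Section TorusIntegral.

Variables (c : R) (s : C).
Hypothesis hc : 4 < c.

Definition torus_ratio t1 t2 := (2 * cos2pi t1 + 2 * cos2pi t2) / c.

Lemma Rabs_torus_ratio_le t1 t2 : Rabs (torus_ratio t1 t2) <= 4 / c.
Proof.
  unfold torus_ratio, Rdiv.
  rewrite Rabs_mult, (Rabs_pos_eq (/ c)) by (apply Rlt_le, Rinv_0_lt_compat; lra).
  apply Rmult_le_compat_r; [apply Rlt_le, Rinv_0_lt_compat; lra|].
  eapply Rle_trans; [apply Rabs_triang|]. assert (H1 := Rabs_2cos2pi_le t1).
  assert (H2 := Rabs_2cos2pi_le t2). lra.
Qed.

Lemma ratio_bound_lt_1 : 0 < 4 / c < 1.
Proof.
  split; [apply Rdiv_lt_0_compat; lra|].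
  apply (Rmult_lt_reg_r c); [lra|]. unfold Rdiv. rewrite Rmult_assoc, Rinv_l by lra. lra.
Qed.

Lemma rpowC_Pc_e2pi t1 t2 :
  rpowC (Cmod (Pc c (e2pi t1) (e2pi t2))) s
  = Cmult (rpowC c s) (cexp (Cmult s (RtoC (ln (1 + torus_ratio t1 t2))))).
Proof.
  rewrite Pc_e2pi, Cmod_R.
  assert (H1 := Rabs_2cos2pi_le t1). assert (H2 := Rabs_2cos2pi_le t2).
  apply Rabs_le_between in H1, H2.
  rewrite Rabs_pos_eq by lra. rewrite !rpowC_pos by lra. rewrite <- cexp_add. f_equal.
  replace (c + 2 * cos2pi t1 + 2 * cos2pi t2) with (c * (1 + torus_ratio t1 t2))
    by (unfold torus_ratio; field; lra).
  assert (Hpos : 0 < 1 + torus_ratio t1 t2).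
  { unfold torus_ratio. replace (1 + (2 * cos2pi t1 + 2 * cos2pi t2) / c)
      with ((c + 2 * cos2pi t1 + 2 * cos2pi t2) / c) by (field; lra).
    apply Rdiv_lt_0_compat; lra. }
  rewrite ln_mult, RtoC_plus by lra. ring.
Qed.

Let integrand t1 t2 := rpowC (Cmod (Pc c (e2pi t1) (e2pi t2))) s.
Let term n := Cmult (rpowC c s) (cbinom s n).
Let majorant n := Cmod (cbinom s n) * (4 / c) ^ n.
Let partial_sum N t1 t2 := sum_n (fun n => Cmult (term n) (RtoC (torus_ratio t1 t2 ^ n))) N.
Let tail N := Cmod (rpowC c s) * (Series majorant - sum_n majorant N).

Lemma is_series_majorant : is_series majorant (Series majorant).
Proof. apply Series_correct, ex_series_Cmod_cbinom, ratio_bound_lt_1. Qed.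

Lemma is_lim_seq_tail : is_lim_seq tail 0.
Proof.
  replace (Finite 0)
    with (Rbar_mult (Cmod (rpowC c s)) (Rbar_minus (Series majorant) (Series majorant)))
    by (simpl; f_equal; ring).
  apply is_lim_seq_mult'; [apply is_lim_seq_const|].
  apply is_lim_seq_minus'; [apply is_lim_seq_const | apply is_series_majorant].
Qed.

Lemma Cmod_integrand_sub_partial_sum_le N t1 t2 :
  Cmod (Cminus (integrand t1 t2) (partial_sum N t1 t2)) <= tail N.
Proof.
  assert (Hx := Rabs_torus_ratio_le t1 t2). assert (Hr := ratio_bound_lt_1).
  assert (HS := is_series_scal (K := C_AbsRing) (V := C_NormedModule) (rpowC c s) _ _
                 (is_series_cbinom s (torus_ratio t1 t2) ltac:(lra))).
  unfold integrand. rewrite rpowC_Pc_e2pi.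
  assert (Hmaj := is_series_scal (K := R_AbsRing) (V := R_NormedModule) (Cmod (rpowC c s)) _ _
                    is_series_majorant).
  unfold tail. replace (Cmod (rpowC c s) * (Series majorant - sum_n majorant N))
    with (scal (Cmod (rpowC c s)) (Series majorant)
          - sum_n (fun n => scal (Cmod (rpowC c s)) (majorant n)) N)
    by (rewrite sum_n_scal_l; symmetry; apply Rmult_minus_distr_l).
  apply (Cmod_series_tail_le _ _ _ _ N); [| | exact Hmaj].
  - eapply is_series_ext; [|exact HS]. intros n. unfold term, scal; simpl; unfold mult; simpl. ring.
  - intros n. unfold term, majorant, scal; simpl; unfold mult; simpl.
    rewrite !Cmod_mult, Cmod_R, <- RPow_abs, Rmult_assoc.
    apply Rmult_le_compat_l; [apply Cmod_ge_0|].
    apply Rmult_le_compat_l; [apply Cmod_ge_0|].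
    apply pow_incr. split; [apply Rabs_pos | exact Hx].
Qed.

Definition inner_moment n t1 :=
  / c ^ n * sum_f_R0 (fun i => Binomial.C n i * cos_moment i * (2 * cos2pi t1) ^ (n - i)) n.

Lemma is_RInt_torus_ratio_pow n t1 :
  is_RInt (fun t2 => torus_ratio t1 t2 ^ n) 0 1 (inner_moment n t1).
Proof.
  apply (is_RInt_ext (fun t2 => / c ^ n * (2 * cos2pi t1 + 2 * cos2pi t2) ^ n)).
  - intros x _. unfold torus_ratio, Rdiv. now rewrite Rpow_mult_distr, pow_inv, Rmult_comm.
  - apply is_RInt_mult_l, is_RInt_shifted_2cos2pi_pow.
Qed.

Lemma is_RInt_inner_moment n : is_RInt (inner_moment n) 0 1 (double_moment n / c ^ n).
Proof.
  unfold Rdiv. rewrite Rmult_comm. apply is_RInt_mult_l, is_RInt_double_moment.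
Qed.

Lemma is_RInt_partial_sum N t1 :
  is_RInt (V := C_R_CompleteNormedModule) (partial_sum N t1) 0 1
    (sum_n (fun n => Cmult (term n) (RtoC (inner_moment n t1))) N).
Proof.
  apply (is_RInt_sum_n (fun n t2 => Cmult (term n) (RtoC (torus_ratio t1 t2 ^ n)))).
  intros n. apply is_RInt_Cmult_RtoC, is_RInt_torus_ratio_pow.
Qed.

Lemma is_RInt_integrand t1 :
  is_RInt (V := C_R_CompleteNormedModule) (integrand t1) 0 1
    (RInt (V := C_R_CompleteNormedModule) (integrand t1) 0 1).
Proof.
  apply (is_RInt_uniform_limit (fun N => partial_sum N t1) _ _ tail
           (fun N => is_RInt_partial_sum N t1));
    [intros; apply Cmod_integrand_sub_partial_sum_le | apply is_lim_seq_tail].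
Qed.

Lemma is_series_zeta_mahler2 :
  is_series (V := C_NormedModule) (fun n => Cmult (term n) (RtoC (double_moment n / c ^ n)))
    (zeta_mahler2 (Pc c) s).
Proof.
  unfold is_series, zeta_mahler2.
  apply (is_RInt_uniform_limit
           (fun N t1 => sum_n (fun n => Cmult (term n) (RtoC (inner_moment n t1))) N) _ _ tail).
  - intros N. apply (is_RInt_sum_n (fun n t1 => Cmult (term n) (RtoC (inner_moment n t1)))).
    intros n. apply is_RInt_Cmult_RtoC, is_RInt_inner_moment.
  - intros N t1.
    assert (Hle := norm_RInt_le_const _ 0 1 _ (tail N) Rle_0_1
                     ltac:(intros x _; rewrite norm_C_R_Cmod; apply Cmod_integrand_sub_partial_sum_le)
                     (is_RInt_minus _ _ _ _ _ _ (is_RInt_integrand t1) (is_RInt_partial_sum N t1))).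
    rewrite norm_C_R_Cmod, Rminus_0_r, Rmult_1_l in Hle. exact Hle.
  - apply is_lim_seq_tail.
Qed.

End TorusIntegral.

(** * The hypergeometric form *)

Lemma poch_RtoC a j : poch (RtoC a) j = RtoC (rpoch a j).
Proof. induction j as [|j IHj]; simpl; [reflexivity|]. now rewrite IHj, RtoC_mult, RtoC_plus. Qed.

Lemma Cpow_RtoC x j : Cpow (RtoC x) j = RtoC (x ^ j).
Proof. induction j as [|j IHj]; simpl; [reflexivity|]. now rewrite IHj, RtoC_mult. Qed.

Lemma rpoch_1 j : rpoch 1 j = INR (fact j).
Proof.
  induction j as [|j IHj]; [reflexivity|]. cbn [rpoch].
  rewrite IHj, fact_simpl, mult_INR, S_INR. ring.
Qed.

Lemma rpoch_half j : rpoch (/ 2) j = INR (fact (2 * j)) / (4 ^ j * INR (fact j)).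
Proof.
  induction j as [|j IHj]; [simpl; field|]. cbn [rpoch]. rewrite IHj.
  replace (2 * S j)%nat with (S (S (2 * j))) by lia.
  rewrite !fact_simpl, !mult_INR, !S_INR, mult_INR. simpl (INR 2). simpl pow.
  assert (H1 := INR_fact_neq_0 (2 * j)). assert (H2 := INR_fact_neq_0 j).
  assert (H3 := pos_INR j). assert (H4 : 0 < 4 ^ j) by (apply pow_lt; lra).
  field. repeat split; lra.
Qed.

Lemma poch_duplication s j :
  Cmult (poch (Copp (Cdiv s (RtoC 2))) j) (poch (Cdiv (Cminus (RtoC 1) s) (RtoC 2)) j)
  = Cmult (cbinom_num s (2 * j)) (RtoC (/ 4 ^ j)).
Proof.
  induction j as [|j IHj]; [simpl; rewrite Rinv_1; ring|].
  replace (2 * S j)%nat with (S (S (2 * j))) by lia. cbn [poch cbinom_num].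
  replace (/ 4 ^ S j) with (/ 4 ^ j * / 4) by (rewrite <- Rinv_mult; f_equal; simpl; ring).
  transitivity (Cmult (Cmult (poch (Copp (Cdiv s (RtoC 2))) j)
                             (poch (Cdiv (Cminus (RtoC 1) s) (RtoC 2)) j))
    (Cmult (Cplus (Copp (Cdiv s (RtoC 2))) (RtoC (INR j)))
           (Cplus (Cdiv (Cminus (RtoC 1) s) (RtoC 2)) (RtoC (INR j))))); [ring|].
  rewrite IHj, S_INR, mult_INR. replace (INR 2) with 2 by (simpl; ring).
  rewrite !RtoC_plus, !RtoC_mult, (RtoC_inv 4) by lra.
  replace (RtoC 4) with (Cmult (RtoC 2) (RtoC 2)) by (rewrite <- RtoC_mult; f_equal; ring).
  field.
Qed.

Lemma F32_term_central_binom c s j :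
  c <> 0 ->
  F32_term (Copp (Cdiv s (RtoC 2))) (Cdiv (Cminus (RtoC 1) s) (RtoC 2)) (RtoC (/ 2))
           (RtoC 1) (RtoC 1) (RtoC (16 / c ^ 2)) j
  = Cmult (Cmult (cbinom s (2 * j)) (RtoC (/ c ^ (2 * j)))) (RtoC (Binomial.C (2 * j) j ^ 2)).
Proof.
  intros Hc. unfold F32_term, cbinom, Binomial.C.
  rewrite poch_duplication, !poch_RtoC, Cpow_RtoC, rpoch_half, rpoch_1.
  replace (2 * j - j)%nat with j by lia.
  replace ((16 / c ^ 2) ^ j) with (4 ^ j * 4 ^ j / c ^ (2 * j))
    by (unfold Rdiv; rewrite Rpow_mult_distr, pow_inv, pow_mult, <- Rpow_mult_distr;
        do 3 f_equal; ring).
  set (F := INR (fact j)). set (F2 := INR (fact (2 * j))).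
  assert (HF : F <> 0) by apply INR_fact_neq_0. assert (HF2 : F2 <> 0) by apply INR_fact_neq_0.
  assert (H4 : 4 ^ j <> 0) by (apply pow_nonzero; lra).
  assert (Hc2 : c ^ (2 * j) <> 0) by (apply pow_nonzero; lra).
  assert (HF4 : F * F * F * F <> 0) by (repeat apply Rmult_integral_contrapositive_currified; auto).
  replace ((F2 / (F * F)) ^ 2) with (F2 * F2 * / (F * F * F * F)) by (field; auto).
  rewrite (RtoC_div F2), (RtoC_div (4 ^ j * 4 ^ j)), !RtoC_mult, !RtoC_inv, !RtoC_mult
    by auto using Rmult_integral_contrapositive_currified.
  assert (A1 := RtoC_neq_0 _ HF). assert (A2 := RtoC_neq_0 _ HF2).
  assert (A3 := RtoC_neq_0 _ H4). assert (A4 := RtoC_neq_0 _ Hc2).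
  match goal with |- ?l = ?r => change (@eq C l r) end. field. repeat split; auto.
Qed.

Lemma is_series_central_binom_sqr c s :
  4 < c ->
  is_series (V := C_NormedModule)
    (fun j => Cmult (Cmult (cbinom s (2 * j)) (RtoC (/ c ^ (2 * j))))
                    (RtoC (Binomial.C (2 * j) j ^ 2)))
    (Cmult (Cinv (rpowC c s)) (zeta_mahler2 (Pc c) s)).
Proof.
  intros hc.
  assert (Hcs : rpowC c s <> RtoC 0) by (rewrite rpowC_pos by lra; apply cexp_neq_0).
  assert (HZ := is_series_scal (K := C_AbsRing) (V := C_NormedModule) (Cinv (rpowC c s)) _ _
                  (is_series_zeta_mahler2 c s hc)).
  apply is_series_even in HZ; [eapply is_series_ext; [|exact HZ]|]; intros j;
    change (scal ?z ?x) with (Cmult z x); unfold Rdiv.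
  - rewrite double_moment_even, !RtoC_mult.
    match goal with |- ?l = ?r => change (@eq C l r) end. field. exact Hcs.
  - rewrite double_moment_odd, Rmult_0_l.
    match goal with |- ?l = ?r => change (@eq C l r) end. ring.
Qed.

Theorem theorem14 (c : R) (s : C) (hc : 4 < c) :
  (exists S : C,
      is_series (V := C_NormedModule)
        (fun j : nat => Cmult (Cmult (cbinom s (2 * j)%nat) (RtoC (/ c ^ (2 * j)%nat)))
                              (RtoC (Binomial.C (2 * j)%nat j ^ 2))) S
      /\ zeta_mahler2 (Pc c) s = Cmult (rpowC c s) S)
  /\
  (exists T : C,
      is_series (V := C_NormedModule)
        (F32_term (Copp (Cdiv s (RtoC 2))) (Cdiv (Cminus (RtoC 1) s) (RtoC 2)) (RtoC (/ 2))
                  (RtoC 1) (RtoC 1) (RtoC (16 / c ^ 2))) T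
      /\ zeta_mahler2 (Pc c) s = Cmult (rpowC c s) T).
Proof.
  assert (Hcs : rpowC c s <> RtoC 0) by (rewrite rpowC_pos by lra; apply cexp_neq_0).
  assert (HZ : zeta_mahler2 (Pc c) s
               = Cmult (rpowC c s) (Cmult (Cinv (rpowC c s)) (zeta_mahler2 (Pc c) s)))
    by (field; exact Hcs).
  assert (HS := is_series_central_binom_sqr c s hc).
  split; eexists; split; [exact HS | exact HZ | | exact HZ].
  eapply is_series_ext; [|exact HS]. intros j. symmetry. apply F32_term_central_binom. lra.
Qed.
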